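(* Fix $\gamma\in(0,1]$ and $0<\alpha<0.25$, and let $\xi>0$ be arbitrarily small. Then for all sufficiently large $N$ and all $i,j\in\{1,\dots,b\}$, $$\big|[J(s^* )]^{-1}_{ij}\big|\le\frac{12}{\gamma}N^{2\alpha+2\xi}.$$
   Context: Let $N\ge1$, $\lambda=1-\gamma/N^\alpha$, and $b=b(N)\ge1$ an integer with $b=O(\log N)$. The mean-field vector field is $f_k(s)=\lambda(s_{k-1}^2-s_k^2)-(s_k-s_{k+1})$, $k=1,\dots,b$, with $s_0=1,s_{b+1}=0$; $s^*$ is its unique equilibrium in $\{s\in\mathbb R^b:1\ge s_1\ge\cdots\ge s_b\ge0\}$. $J(s^* )$ is the Jacobian of $f$ at $s^*$: the $b\times b$ tridiagonal matrix with $J_{kk}=-2\lambda s^*_k-1$, $J_{k,k+1}=1$, $J_{k+1,k}=2\lambda s^*_k$. Both $s^*$ and $J(s^* )$ depend on $N$. *)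

From HB Require Import structures.
From mathcomp Require Import all_boot all_order all_algebra.
From mathcomp Require Import all_classical all_reals all_analysis.
Set Implicit Arguments. Unset Strict Implicit. Unset Printing Implicit Defensive.
Import Order.TTheory GRing.Theory Num.Theory.
Local Open Scope ring_scope.

(* Mean-field model.  Components s_1..s_b are stored in a function
   s : 'I_b -> R with s_k = s (k-1) (0-based ordinals). *)

Definition lam {R : realType} (gamma alpha : R) (N : nat) : R :=
  1 - gamma / (N%:R `^ alpha).

(* extended vector: sext s 0 = s_0 = 1, sext s k = s_k (1<=k<=b), else 0 (s_{b+1}=0) *)
Definition sext {R : realType} (n : nat) (s : 'I_n -> R) (k : nat) : R :=
  if k == 0%N then 1 else oapp s 0 (insub k.-1 : option 'I_n).

Definition mf_field {R : realType} (l : R) (n : nat) (s : 'I_n -> R) (k : nat) : R :=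
  l * (sext s k.-1 ^+ 2 - sext s k ^+ 2) - (sext s k - sext s k.+1).

Definition is_equilibrium {R : realType} (l : R) (n : nat) (s : 'I_n -> R) : Prop :=
  (forall k : nat, (1 <= k <= n)%N -> mf_field l s k = 0) /\
  (forall k : nat, (1 <= k <= n)%N -> sext s k <= sext s k.-1) /\
  0 <= sext s n.

Definition Jmat {R : realType} (l : R) (n : nat) (s : 'I_n -> R) : 'M[R]_n :=
  \matrix_(i < n, j < n)
    (if i == j then - (2 * l * s i) - 1
     else if (j == i.+1 :> nat) then 1
     else if (i == j.+1 :> nat) then 2 * l * s j
     else 0).

From HB Require Import structures.
From mathcomp Require Import all_boot all_order all_algebra.
From mathcomp Require Import all_classical all_reals all_analysis.
From mathcomp Require Import ring lra.
Set Implicit Arguments.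
Unset Strict Implicit.
Unset Printing Implicit Defensive.

Import Order.TTheory GRing.Theory Num.Theory.
Local Open Scope ring_scope.

(* The Jacobian is tridiagonal with rows (a_(k-1), -a_k - 1, 1), where
   a_k = 2 lambda s_k >= 0.  Its inverse can be written down explicitly:
   column j solves the forward recursion u_(k+1) = a_k u_k - [k < j],
   corrected by a multiple of the growth sequence z_(k+1) = a_k z_k + 1, so the
   entries of row k are bounded by 2 z_k.  At equilibrium the flux
   lambda s_k^2 - s_(k+1) is conserved and nonnegative, hence
   s_k <= lambda^(2^k - 1): s_k > 1/2 forces 2^k <= 2 N^alpha / gamma, and
   a_k <= 1 afterwards.  Thus z_k <= 4 b N^alpha / gamma, and b = O(log N) is
   eventually below N^(2 xi). *)

Section Tridiagonal.
Variable R : realFieldType.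

Lemma sum_delta n m (G : nat -> R) :
  \sum_(j < n) (j == m :> nat)%:R * G j = if (m < n)%N then G m else 0.
Proof.
elim: n => [|n IH]; first by rewrite big_ord0.
rewrite big_ord_recr /= IH ltnS.
by case: (ltngtP m n) => [_|_|->]; rewrite ?mul0r ?addr0 ?mul1r ?add0r.
Qed.

Lemma sum_delta_succ n (i : 'I_n) (G : nat -> R) : G 0%N = 0 ->
  \sum_(j < n) (j.+1 == i :> nat)%:R * G j.+1 = G i.
Proof.
case: i => [[|i] /= lt_i_n] G0.
  by rewrite big1 // => j _; rewrite mul0r.
under eq_bigr do rewrite eqSS.
by rewrite (sum_delta _ _ (fun j => G j.+1)) (ltn_trans _ lt_i_n).
Qed.

(* Coefficients are 1-based: the 0-based row i reads (a_i, -a_(i+1) - 1, 1). *)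
Definition tridiag_mx (a : nat -> R) n : 'M[R]_n :=
  \matrix_(i, j) ((j == i :> nat)%:R * (- a i.+1 - 1) + (j == i.+1 :> nat)%:R
                  + (j.+1 == i :> nat)%:R * a i).

Lemma tridiag_mx_row a n (F : nat -> R) (i : 'I_n) : F 0%N = 0 ->
  \sum_(j < n) tridiag_mx a n i j * F j.+1 =
    a i * F i - (a i.+1 + 1) * F i.+1 + (if (i.+1 < n)%N then F i.+2 else 0).
Proof.
move=> F0; under eq_bigr do rewrite mxE !mulrDl -!mulrA.
rewrite !big_split /= (sum_delta _ _ (fun j => (- a i.+1 - 1) * F j.+1)).
rewrite (sum_delta _ _ (fun j => F j.+1)) ltn_ord.
by rewrite (@sum_delta_succ n i (fun k => a i * F k)) ?F0 ?mulr0 //; lra.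
Qed.

Section ExplicitInverse.
Variables (a : nat -> R) (n : nat).
Hypothesis a_ge0 : forall k, 0 <= a k.

Fixpoint fwd_seq (c : nat -> R) k :=
  if k is k'.+1 then a k' * fwd_seq c k' + c k' else 0.

Lemma fwd_seq_norm_le (c d : nat -> R) k :
  (forall k, `|c k| <= d k) -> `|fwd_seq c k| <= fwd_seq d k.
Proof.
move=> cd; elim: k => [|k IH] /=; first by rewrite normr0.
apply: (le_trans (ler_normD _ _)); rewrite normrM (ger0_norm (a_ge0 k)).
by apply: lerD (cd k); apply: ler_wpM2l.
Qed.

Definition growth := fwd_seq (fun=> 1).
Let partial_col j := fwd_seq (fun k => - ((k < j)%N)%:R).

Lemma growth_ge0 k : 0 <= growth k.
Proof.
apply: le_trans (normr_ge0 (growth k)) _.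
by apply: fwd_seq_norm_le => k'; rewrite normr1.
Qed.

Lemma norm_partial_col_le j k : `|partial_col j k| <= growth k.
Proof.
by apply: fwd_seq_norm_le => k'; rewrite normrN; case: (k' < j)%N; rewrite ?normr0 ?normr1.
Qed.

Lemma shift_denom_gt0 : 0 < 1 + a n * growth n.
Proof. by rewrite ltr_pwDl // mulr_ge0 ?growth_ge0. Qed.

(* Chosen so that [a n * inv_col j n = shift j]: the last row then obeys the
   same relation [inv_col_rec] as the others. *)
Let shift j := a n * partial_col j n / (1 + a n * growth n).
Let inv_col j k := partial_col j k - shift j * growth k.

Lemma inv_col_rec j k :
  a k * inv_col j k - inv_col j k.+1 - a n * inv_col j n = ((k < j)%N)%:R.
Proof.
have shiftE : a n * inv_col j n = shift j.
  by rewrite /inv_col /shift; field; rewrite gt_eqF ?shift_denom_gt0.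
rewrite shiftE /inv_col /growth /partial_col /=; lra.
Qed.

Lemma norm_inv_col_le j k : `|inv_col j k| <= 2 * growth k.
Proof.
have shift_le1 : `|shift j| <= 1.
  have D0 := shift_denom_gt0.
  rewrite /shift normrM normfV (gtr0_norm D0) normrM (ger0_norm (a_ge0 n)).
  rewrite ler_pdivrMr // mul1r.
  have := ler_wpM2l (a_ge0 n) (norm_partial_col_le j n); lra.
apply: le_trans (ler_normB _ _) _; rewrite normrM (ger0_norm (growth_ge0 k)).
have := norm_partial_col_le j k; have := ler_wpM2r (growth_ge0 k) shift_le1; lra.
Qed.

Definition tridiag_inv : 'M[R]_n := \matrix_(i, j) inv_col j.+1 i.+1.

Lemma tridiag_mx_mulV : tridiag_mx a n *m tridiag_inv = 1%:M.
Proof.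
(* Row i of the product is the difference of [inv_col_rec] at i and i + 1,
   and just [inv_col_rec] at i for the last row. *)
apply/matrixP => i j; rewrite mxE [RHS]mxE.
under eq_bigr do rewrite [tridiag_inv _ _]mxE.
rewrite (@tridiag_mx_row a n (inv_col j.+1)); last first.
  by rewrite /inv_col /partial_col /growth /= mulr0 subr0.
have rec_i := inv_col_rec j.+1 i.
case: ifP => [lt_i1_n|].
  have rec_i1 := inv_col_rec j.+1 i.+1.
  have -> : (i == j)%:R = ((i < j.+1)%N)%:R - ((i.+1 < j.+1)%N)%:R :> R.
    by rewrite -val_eqE /= !ltnS; case: ltngtP; rewrite ?subrr ?subr0.
  lra.
move/negbT; rewrite -leqNgt => le_n_i1.
have n_eq : n = i.+1 by apply/anti_leq; rewrite le_n_i1 ltn_ord.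
have -> : (i == j)%:R = ((i < j.+1)%N)%:R :> R.
  by rewrite -val_eqE /= ltnS eqn_leq -[(j <= i)%N]ltnS -n_eq ltn_ord andbT.
have col_n : inv_col j.+1 i.+1 = inv_col j.+1 n := congr1 (inv_col j.+1) (esym n_eq).
by rewrite col_n in rec_i; rewrite -[in LHS]n_eq; lra.
Qed.

Lemma tridiag_mx_unit : tridiag_mx a n \in unitmx.
Proof. exact: (mulmx1_unit tridiag_mx_mulV).1. Qed.

Lemma norm_invmx_tridiag_mx_le i j :
  `|invmx (tridiag_mx a n) i j| <= 2 * growth i.+1.
Proof.
have -> : invmx (tridiag_mx a n) = tridiag_inv.
  by rewrite -[LHS]mulmx1 -tridiag_mx_mulV mulmxA mulVmx ?mul1mx ?tridiag_mx_unit.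
by rewrite mxE norm_inv_col_le.
Qed.

End ExplicitInverse.

Lemma growth_le (a : nat -> R) K :
  (forall k, 0 <= a k) -> (forall k, a k <= 2) -> (forall k, (K < k)%N -> a k <= 1) ->
  forall k, growth a k <= k%:R * 2 ^+ minn k K.+1.
Proof.
move=> a_ge0 a_le2 a_le1; rewrite /growth; elim=> [|k IH] /=; first by rewrite mul0r.
have z_ge0 : 0 <= fwd_seq a (fun=> 1) k by apply: growth_ge0.
rewrite -natr1; case: (leqP k K) => [le_kK|lt_Kk].
  have le_kK1 : (k <= K.+1)%N := leq_trans le_kK (leqnSn K).
  rewrite (minn_idPl le_kK1) in IH; rewrite (minn_idPl (le_kK : (k.+1 <= K.+1)%N)).
  have := ler_pM (a_ge0 k) z_ge0 (a_le2 k) IH.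
  have : 1 <= 2 ^+ k :> R by apply: exprn_ege1; lra.
  rewrite exprS; nra.
rewrite (minn_idPr lt_Kk) in IH; rewrite (minn_idPr (ltnW lt_Kk : (K.+1 <= k.+1)%N)).
have := ler_wpM2r z_ge0 (a_le1 k lt_Kk).
have : 1 <= 2 ^+ K.+1 :> R by apply: exprn_ege1; lra.
nra.
Qed.

End Tridiagonal.

Lemma bernoulli_le1 (R : realFieldType) (t : R) p : 0 <= t -> t <= 1 ->
  (1 - t) ^+ p * (1 + p%:R * t) <= 1.
Proof.
move=> t_ge0 t_le1; elim: p => [|p IH]; first by rewrite mul0r addr0 mulr1.
have -> : (1 - t) ^+ p.+1 * (1 + p.+1%:R * t)
    = (1 - t) ^+ p * (1 + p%:R * t) - (1 - t) ^+ p * (p.+1%:R * t ^+ 2).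
  by rewrite exprS -natr1; ring.
have : 0 <= (1 - t) ^+ p * (p.+1%:R * t ^+ 2) by rewrite !mulr_ge0 ?exprn_ge0 ?subr_ge0.
lra.
Qed.

Section MeanField.
Variable R : realType.

Lemma sextS n (s : 'I_n -> R) (i : 'I_n) : sext s i.+1 = s i.
Proof.
rewrite /sext /=; case: insubP => [j _ /val_inj -> //|].
by rewrite ltn_ord.
Qed.

Lemma sext_gt n (s : 'I_n -> R) k : (n < k)%N -> sext s k = 0.
Proof. by case: k => // k lt_n_k; rewrite /sext /= insubF // ltnNge -ltnS lt_n_k. Qed.

Lemma Jmat_tridiag l n (s : 'I_n -> R) :
  Jmat l s = tridiag_mx (fun k => 2 * l * sext s k) n.
Proof.
apply/matrixP => i j; rewrite !mxE sextS.
case: (eqVneq i j) => [<-|ne_ij].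
  by rewrite eqxx (ltn_eqF (ltnSn i)) (gtn_eqF (ltnSn i)) /=; lra.
have -> : (j == i :> nat) = false by apply/negbTE; rewrite eq_sym.
case: eqP => [->|_].
  by rewrite (gtn_eqF (ltnW (ltnSn i.+1))) /=; lra.
rewrite [(j.+1 == _)]eq_sym; case: eqP => [->|_] /=; rewrite ?eqxx ?sextS /=; lra.
Qed.

Definition flux l n (s : 'I_n -> R) k := l * sext s k ^+ 2 - sext s k.+1.

Lemma mf_field_flux l n (s : 'I_n -> R) k :
  mf_field l s k.+1 = flux l s k - flux l s k.+1.
Proof. by rewrite /mf_field /flux /=; ring. Qed.

Section Equilibrium.
Variables (l : R) (n : nat) (s : 'I_n -> R).
Hypotheses (l_ge0 : 0 <= l) (s_eq : is_equilibrium l s).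

Lemma sext_nonincreasing : nonincreasing_seq (sext s).
Proof.
apply/nonincreasing_seqP => k; case: (ltngtP k n) => [lt_kn|lt_nk|->].
- by apply: s_eq.2.1 k.+1 _; rewrite lt_kn.
- by rewrite !sext_gt // ltnW.
- by rewrite sext_gt ?s_eq.2.2.
Qed.

Lemma sext_le1 k : sext s k <= 1.
Proof. exact: sext_nonincreasing (leq0n k). Qed.

Lemma sext_ge0 k : 0 <= sext s k.
Proof.
case: (leqP k n) => [le_kn|lt_nk]; last by rewrite sext_gt.
exact: le_trans s_eq.2.2 (sext_nonincreasing le_kn).
Qed.

Lemma flux_ge0 k : 0 <= flux l s k.
Proof.
(* The equations make the flux constant on [0, n], where it ends at l s_n^2. *)
have flux0 j : (j <= n)%N -> flux l s j = flux l s 0.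
  elim: j => [//|j IH] lt_jn; rewrite -IH; last exact: ltnW.
  by apply/esym/eqP; rewrite -subr_eq0 -mf_field_flux s_eq.1.
case: (leqP k n) => [le_kn|lt_nk].
  rewrite (flux0 k le_kn) -(flux0 n (leqnn n)) /flux (sext_gt s (ltnSn n)) subr0.
  by rewrite mulr_ge0 ?sqr_ge0.
by rewrite /flux (sext_gt s lt_nk) (sext_gt s (leqW lt_nk)) expr2 !mulr0 subr0.
Qed.

Lemma sext_succ_le k : sext s k.+1 <= l * sext s k ^+ 2.
Proof. by have := flux_ge0 k; rewrite /flux subr_ge0. Qed.

Lemma sext_le_expr k : sext s k <= l ^+ (2 ^ k).-1.
Proof.
elim: k => [|k IH]; first by rewrite expr0.
have -> : (2 ^ k.+1).-1 = ((2 ^ k).-1 * 2).+1.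
  rewrite expnS; have : (0 < 2 ^ k)%N by rewrite expn_gt0.
  by case: (2 ^ k)%N => [//|m _]; rewrite mulnC mulSn.
rewrite exprS exprM; apply: le_trans (sext_succ_le k) _.
by rewrite ler_wpM2l // lerXn2r ?nnegrE ?sext_ge0 ?exprn_ge0.
Qed.

Lemma expn2_le_of_sext_gt_half t k : 0 < t -> t <= 1 -> l = 1 - t ->
  1 / 2 < sext s k -> (2 ^ k)%N%:R <= 2 / t.
Proof.
move=> t_gt0 t_le1 l_def half_lt.
have := bernoulli_le1 (2 ^ k).-1 (ltW t_gt0) t_le1.
have : 1 / 2 < (1 - t) ^+ (2 ^ k).-1.
  by rewrite -l_def; apply: lt_le_trans half_lt (sext_le_expr k).
set p := (2 ^ k).-1 => half_lt_pow bern.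
have pt_lt1 : p%:R * t < 1.
  have pos : 0 < 1 + p%:R * t.
    by have := mulr_ge0 (ler0n R p) (ltW t_gt0); lra.
  by move: half_lt_pow; rewrite -(ltr_pM2r pos); lra.
rewrite -(prednK (expn_gt0 2 k)) -/p -natr1 ler_pdivlMr //; lra.
Qed.

Lemma sext_half_threshold t : 0 < t -> t <= 1 -> l = 1 - t ->
  exists K, (2 ^ K)%N%:R <= 2 / t /\ forall k, (K < k)%N -> sext s k <= 1 / 2.
Proof.
move=> t_gt0 t_le1 l_def.
have ex_half : exists k, 1 / 2 < sext s k by exists 0%N; rewrite /sext /=; lra.
have half_le_n k : 1 / 2 < sext s k -> (k <= n)%N.
  by rewrite leqNgt; apply: contraTN => /(sext_gt s) ->; lra.
case: (ex_maxnP ex_half half_le_n) => K half_K max_K.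
exists K; split; first exact: expn2_le_of_sext_gt_half half_K.
by move=> k lt_Kk; rewrite leNgt; apply: contraTN lt_Kk => /max_K; rewrite leqNgt.
Qed.

End Equilibrium.

Lemma norm_invmx_Jmat_le (l t : R) n (s : 'I_n -> R) :
  0 < t -> t <= 1 -> l = 1 - t -> is_equilibrium l s ->
  Jmat l s \in unitmx /\ forall i j, `|invmx (Jmat l s) i j| <= 8 * n%:R / t.
Proof.
move=> t_gt0 t_le1 l_def s_eq.
have l_ge0 : 0 <= l by lra.
have l_le1 : l <= 1 by lra.
pose a k := 2 * l * sext s k.
have a_ge0 k : 0 <= a k by have := sext_ge0 s_eq k; rewrite /a; nra.
have a_le2 k : a k <= 2.
  have := ler_pM l_ge0 (sext_ge0 s_eq k) l_le1 (sext_le1 s_eq k).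
  rewrite /a -mulrA; lra.
have [K [pow_K sext_le_half]] := sext_half_threshold l_ge0 s_eq t_gt0 t_le1 l_def.
have a_le1 k : (K < k)%N -> a k <= 1.
  move=> /sext_le_half; have := sext_ge0 s_eq k; rewrite /a; nra.
rewrite Jmat_tridiag; split; first exact: tridiag_mx_unit.
move=> i j; apply: le_trans (norm_invmx_tridiag_mx_le a_ge0 i j) _.
have z_le := growth_le a_ge0 a_le2 a_le1 i.+1.
have i_le : i.+1%:R <= n%:R :> R by rewrite ler_nat.
have pow_le : 2 ^+ minn i.+1 K.+1 <= 4 / t :> R.
  apply: le_trans (_ : 2 ^+ K.+1 <= _); first by rewrite ler_eXn2l ?geq_minr //; lra.
  by rewrite exprS -natrX; move: pow_K; rewrite !ler_pdivlMr //; lra.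
have := ler_pM (ler0n _ _) (exprn_ge0 _ (ler0n R 2)) i_le pow_le.
lra.
Qed.

End MeanField.

Lemma ln_le_powR (R : realType) (x e : R) : 0 < e -> 0 < x -> ln x <= x `^ e / e.
Proof.
move=> e_gt0 x_gt0; have := ln_sublinear (powR_gt0 e x_gt0).
by rewrite ln_powR ler_pdivlMr // mulrC => /ltW.
Qed.

Lemma mul_ln_le_powR (R : realType) (C e x : R) : 0 < e -> 1 <= x ->
  (`|C| / e) `^ e^-1 <= x -> C * ln x <= x `^ (2 * e).
Proof.
move=> e_gt0 x_ge1 le_x.
have x_gt0 : 0 < x by lra.
have Ce_ge0 : 0 <= `|C| / e by rewrite divr_ge0 // ltW.
have Ce_le : `|C| / e <= x `^ e.
  have := ge0_ler_powR (ltW e_gt0) (powR_ge0 _ _) (ltW x_gt0) le_x.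
  by rewrite -powRrM mulVf ?gt_eqF // powRr1.
have ln_ge0x := ln_ge0 x_ge1.
have := ler_wpM2r ln_ge0x (ler_norm C).
have := ler_wpM2l (normr_ge0 C) (ln_le_powR e_gt0 x_gt0).
have := ler_wpM2r (powR_ge0 x e) Ce_le.
have -> : 2 * e = e + e by ring.
rewrite powRD ?(gt_eqF x_gt0) ?implybT //; lra.
Qed.

Theorem lemma7 (R : realType) (gamma alpha xi : R) (b : nat -> nat)
    (sstar : forall N : nat, 'I_(b N) -> R) :
  0 < gamma <= 1 ->
  0 < alpha < 1 / 4 ->
  0 < xi ->
  (forall N, (1 <= b N)%N) ->
  (exists (C : R) (N0 : nat), forall N, (N0 <= N)%N -> (b N)%:R <= C * ln N%:R) ->
  (exists N1 : nat, forall N, (N1 <= N)%N -> is_equilibrium (lam gamma alpha N) (sstar N)) ->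
  exists N0 : nat, forall N : nat, (N0 <= N)%N ->
    Jmat (lam gamma alpha N) (sstar N) \in unitmx /\
    forall i j : 'I_(b N),
      `| invmx (Jmat (lam gamma alpha N) (sstar N)) i j |
        <= 12 / gamma * N%:R `^ (2 * alpha + 2 * xi).
Proof.
move=> /andP[g_gt0 g_le1] /andP[a_gt0 _] xi_gt0 _ [C [N2 b_le]] [N1 s_eq].
exists (maxn (maxn N1 N2) (Num.truncn ((`|C| / xi) `^ xi^-1)).+1) => N.
rewrite !geq_max => /andP[/andP[le_N1 le_N2] lt_trunc_N].
have N_ge1 : 1 <= N%:R :> R by rewrite ler1n (leq_trans _ lt_trunc_N).
have N_large : (`|C| / xi) `^ xi^-1 <= N%:R.
  by apply: le_trans (ltW (truncnS_gt _)) _; rewrite ler_nat.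
set P := N%:R `^ alpha.
have P_ge1 : 1 <= P by have := ler_powR N_ge1 (ltW a_gt0); rewrite powRr0.
have t_gt0 : 0 < gamma / P by rewrite divr_gt0 //; lra.
have t_le1 : gamma / P <= 1 by rewrite ler_pdivrMr ?mul1r; lra.
have [J_unit J_inv] := norm_invmx_Jmat_le t_gt0 t_le1 (erefl (lam gamma alpha N)) (s_eq N le_N1).
split => // i j; apply: le_trans (J_inv i j) _.
have b_le_pow := le_trans (b_le N le_N2) (mul_ln_le_powR xi_gt0 N_ge1 N_large).
have P_le : P <= N%:R `^ (2 * alpha) by rewrite ler_powR //; lra.
rewrite powRD ?(gt_eqF (lt_le_trans ltr01 N_ge1)) ?implybT //.
have -> : 8 * (b N)%:R / (gamma / P) = 8 / gamma * ((b N)%:R * P).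
  by field; rewrite !gt_eqF // (lt_le_trans ltr01 P_ge1).
apply: ler_pM; rewrite ?mulr_ge0 ?invr_ge0 ?ler0n ?(ltW g_gt0) //; first lra.
  by rewrite ler_wpM2r ?invr_ge0 ?(ltW g_gt0) //; lra.
by rewrite mulrC ler_pM ?ler0n //; lra.
Qed.
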